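(* Let $L_a,L_b,L_c$ be Lagrangians in $\mathbf R^{2n}$ and let $(\mathbf e_a,\mathbf f_a)$, $(\mathbf e_b,\mathbf f_b)$, $(\mathbf e_c,\mathbf f_c)$ be symplectic bases such that $L_a=\mathrm{Span}(\mathbf e_c)=\mathrm{Span}(\mathbf f_b)=\mathrm{Span}(\mathbf e_a+\mathbf f_a)$, $L_b=\mathrm{Span}(\mathbf e_a)=\mathrm{Span}(\mathbf f_c)=\mathrm{Span}(\mathbf e_b+\mathbf f_b)$, $L_c=\mathrm{Span}(\mathbf e_b)=\mathrm{Span}(\mathbf f_a)=\mathrm{Span}(\mathbf e_c+\mathbf f_c)$. Let $A,B,C\in\mathrm{GL}(n,\mathbf R)$ be the matrices uniquely defined by $\mathbf f_b=-\mathbf e_c\cdot A$, $\mathbf f_c=-\mathbf e_a\cdot B$, $\mathbf f_a=-\mathbf e_b\cdot C$. Then $A,B,C$ are orthogonal and $CBA=-\mathrm{Id}$. Furthermore $\mathbf e_b=(\mathbf e_c+\mathbf f_c)\cdot A$, $\mathbf e_c=(\mathbf e_a+\mathbf f_a)\cdot B$, and $\mathbf e_a=(\mathbf e_b+\mathbf f_b)\cdot C$.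
   Context: $\mathbf R^{2n}$ carries the standard symplectic form $\omega(x,y)={}^T x\begin{pmatrix}0&\mathrm{Id}\\-\mathrm{Id}&0\end{pmatrix}y$; a Lagrangian is an $n$-dimensional subspace on which $\omega$ vanishes. A symplectic basis is a pair $(\mathbf e,\mathbf f)$ of $n$-tuples of vectors forming a basis with $\omega(e_i,e_j)=\omega(f_i,f_j)=0$ and $\omega(e_i,f_j)=\delta_{ij}$. For an $n$-tuple $\mathbf v=(v_1,\dots,v_n)$ and an $n\times n$ matrix $g$, $\mathbf v\cdot g$ is the $n$-tuple whose $j$-th entry is $\sum_i v_i g_{ij}$; $\mathbf v+\mathbf w$ is the termwise sum; $\mathrm{Span}(\mathbf v)$ is the span of its entries. *)

(* Vectors of R^{2n} are row vectors 'rV[R]_(n + n);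
   an n-tuple of vectors (v_1,...,v_n) is the n x 2n matrix whose i-th row is v_i. *)
From HB Require Import structures.
From mathcomp Require Import all_boot all_order all_algebra.
From mathcomp Require Import reals.
Set Implicit Arguments. Unset Strict Implicit. Unset Printing Implicit Defensive.
Import Order.TTheory GRing.Theory Num.Theory.
Local Open Scope ring_scope.

Section Symp.
Variable R : realType.
Variable n : nat.

Definition Jmx : 'M[R]_(n + n) := block_mx 0 1%:M (- 1%:M) 0.

Definition omega (x y : 'rV[R]_(n + n)) : R := (x *m Jmx *m y^T) 0 0.

Definition tmul (V : 'M[R]_(n, n + n)) (g : 'M[R]_n) : 'M[R]_(n, n + n) :=
  \matrix_(j < n) (\sum_(i < n) g i j *: row i V).

(* L (given by a matrix whose row space is the subspace) is Lagrangian *)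
Definition lagrangian (L : 'M[R]_(n + n)) : Prop :=
  \rank L = n /\
  forall x y : 'rV[R]_(n + n), (x <= L)%MS -> (y <= L)%MS -> omega x y = 0.

Definition symplectic_basis (E F : 'M[R]_(n, n + n)) : Prop :=
  col_mx E F \in unitmx /\
  (forall i j, omega (row i E) (row j E) = 0) /\
  (forall i j, omega (row i F) (row j F) = 0) /\
  (forall i j, omega (row i E) (row j F) = (i == j)%:R).

Definition orthogonal_mx (A : 'M[R]_n) : Prop := A *m A^T = 1%:M.

End Symp.

(* Pair two n-tuples X, Y through their Gram matrix gram X Y = X J Y^T;
   then v . g is g^T v and a symplectic basis (E, F) is a pair with
   gram E E = gram F F = 0 and gram E F = 1.  Expanding the spans in the
   basis (e_c, f_c), say e_b = M (e_c + f_c), e_a = N f_c and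
   e_a + f_a = P e_c, and computing Gram matrices against e_c gives
   M A = 1, B^T N = -1 and C^T M = N, while gram e_a f_a = 1 gives N N^T = 1.
   Hence B = -N is orthogonal and C^T = -B A.  Rotating a -> b -> c -> a
   yields the orthogonality of A and C as well, C C^T = 1 turns C^T = -B A
   into C B A = -1, and M = A^-1 = A^T gives e_b = (e_c + f_c) . A. *)
From HB Require Import structures.
From mathcomp Require Import all_boot all_order all_algebra.
From mathcomp Require Import reals.
Import Order.TTheory GRing.Theory Num.Theory.
Set Implicit Arguments. Unset Strict Implicit.
Local Open Scope ring_scope.

Section Gram.
Variables (R : realType) (n : nat).
Implicit Types (X Y Z : 'M[R]_(n, n + n)) (P : 'M[R]_n).

Definition gram X Y : 'M[R]_n := X *m Jmx R n *m Y^T.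

Lemma gramE X Y i j : gram X Y i j = omega (row i X) (row j Y).
Proof.
rewrite /gram /omega tr_row -row_mul !mxE.
by apply: eq_bigr => k _; rewrite !mxE.
Qed.

Lemma tmulE X P : tmul X P = P^T *m X.
Proof.
apply/matrixP=> j k; rewrite !mxE summxE.
by apply: eq_bigr => i _; rewrite !mxE.
Qed.

Lemma gramMl P X Y : gram (P *m X) Y = P *m gram X Y.
Proof. by rewrite /gram !mulmxA. Qed.

Lemma gramMr P X Y : gram X (P *m Y) = gram X Y *m P^T.
Proof. by rewrite /gram trmx_mul !mulmxA. Qed.

Lemma gramDl X Y Z : gram (X + Y) Z = gram X Z + gram Y Z.
Proof. by rewrite /gram !mulmxDl. Qed.

Lemma gramDr X Y Z : gram X (Y + Z) = gram X Y + gram X Z.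
Proof. by rewrite /gram linearD /= mulmxDr. Qed.

Lemma gramNl X Y : gram (- X) Y = - gram X Y.
Proof. by rewrite /gram !mulNmx. Qed.

Lemma gramNr X Y : gram X (- Y) = - gram X Y.
Proof. by rewrite /gram linearN /= mulmxN. Qed.

Lemma trmx_Jmx : (Jmx R n)^T = - Jmx R n.
Proof.
rewrite /Jmx tr_block_mx !trmx0 trmx1 linearN /= trmx1 opp_block_mx.
by rewrite !oppr0 opprK.
Qed.

Lemma gram_antisym X Y : gram Y X = - (gram X Y)^T.
Proof. by rewrite /gram !trmx_mul trmxK trmx_Jmx mulNmx mulmxN mulmxA opprK. Qed.

Lemma symplectic_basis_gram X Y : symplectic_basis X Y ->
  [/\ gram X X = 0, gram Y Y = 0 & gram X Y = 1%:M].
Proof.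
by case=> _ [hXX [hYY hXY]]; split; apply/matrixP=> i j;
  rewrite gramE ?hXX ?hYY ?hXY !mxE.
Qed.

End Gram.

Lemma eqmx_submx (F : fieldType) (m1 m2 m3 k : nat)
    (L : 'M[F]_(m1, k)) (X : 'M_(m2, k)) (Y : 'M_(m3, k)) :
  (L == X)%MS -> (L == Y)%MS -> (X <= Y)%MS.
Proof. by move=> /eqmxP <- /eqmxP <-. Qed.

Lemma mulmx_orthogonal_inv (R : realType) (n : nat) (M A : 'M[R]_n) :
  M *m A = 1%:M -> orthogonal_mx A -> M = A^T.
Proof. by move=> MA oA; rewrite -[M]mulmx1 -oA mulmxA MA mul1mx. Qed.

Lemma symplectic_triangle_step (R : realType) (n : nat)
    (ea fa eb fb ec fc : 'M[R]_(n, n + n)) (A B C : 'M[R]_n) :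
  gram ec ec = 0 -> gram fc fc = 0 -> gram ec fc = 1%:M ->
  gram ea fa = 1%:M -> gram eb fb = 1%:M ->
  fb = - (A^T *m ec) -> fc = - (B^T *m ea) -> fa = - (C^T *m eb) ->
  (eb <= (ec + fc)%R)%MS -> ((ea + fa)%R <= ec)%MS -> (ea <= fc)%MS ->
  [/\ orthogonal_mx B, C^T = - (B *m A) &
      exists2 M, eb = M *m (ec + fc) & M *m A = 1%:M].
Proof.
move=> Gcc Gff Gcf Gaa Gbb hfb hfc hfa /submxP[M hM] /submxP[P hP] /submxP[N hN].
have Gfc : gram fc ec = - 1%:M by rewrite gram_antisym Gcf trmx1.
have Gsc : gram (ec + fc) ec = - 1%:M by rewrite gramDl Gcc Gfc add0r.
have BtN : B^T *m N = - 1%:M.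
  have := congr1 (fun Z => gram Z ec) hfc.
  by rewrite /= hN gramNl !gramMl Gfc mulmxN mulmx1 mulmxN opprK => <-.
have MA : M *m A = 1%:M.
  by rewrite -Gbb hM hfb gramNr gramMr gramMl Gsc trmxK mulmxN mulNmx mulmx1 opprK.
have CtM : C^T *m M = N.
  have := congr1 (fun Z => gram Z ec) hP.
  rewrite /= gramMl Gcc mulmx0 hN hfa hM gramDl gramNl !gramMl Gsc Gfc.
  by rewrite !mulmxN !mulmx1 opprK addrC => /eqP; rewrite subr_eq0 => /eqP.
have NNt : N *m N^T = 1%:M.
  move: Gaa; rewrite hN hfa hM gramMl gramNr gramMr gramMr gramDr Gff addr0 Gfc.
  by rewrite !mulNmx mul1mx opprK -trmx_mul CtM.
have Bn : B = - N.
  apply: trmx_inj; rewrite linearN /= -[B^T]mulmx1 -NNt mulmxA BtN.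
  by rewrite mulNmx mul1mx.
split; last by exists M.
- by rewrite /orthogonal_mx Bn linearN /= mulNmx mulmxN opprK NNt.
- by rewrite -[C^T]mulmx1 -MA mulmxA CtM Bn mulNmx opprK.
Qed.

Theorem lemma3p8 (R : realType) (n : nat)
  (La Lb Lc : 'M[R]_(n + n))
  (ea fa eb fb ec fc : 'M[R]_(n, n + n))
  (A B C : 'M[R]_n) :
  lagrangian La -> lagrangian Lb -> lagrangian Lc ->
  symplectic_basis ea fa -> symplectic_basis eb fb -> symplectic_basis ec fc ->
  (La == ec)%MS -> (La == fb)%MS -> (La == (ea + fa)%R)%MS ->
  (Lb == ea)%MS -> (Lb == fc)%MS -> (Lb == (eb + fb)%R)%MS ->
  (Lc == eb)%MS -> (Lc == fa)%MS -> (Lc == (ec + fc)%R)%MS ->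
  A \in unitmx -> B \in unitmx -> C \in unitmx ->
  fb = - tmul ec A -> fc = - tmul ea B -> fa = - tmul eb C ->
  [/\ orthogonal_mx A, orthogonal_mx B & orthogonal_mx C] /\
  C *m B *m A = - 1%:M /\
  [/\ eb = tmul (ec + fc) A,
      ec = tmul (ea + fa) B &
      ea = tmul (eb + fb) C].
Proof.
move=> _ _ _ /symplectic_basis_gram[Gaa Gfa Gaf]
  /symplectic_basis_gram[Gbb Gfb Gbf] /symplectic_basis_gram[Gcc Gfc Gcf].
move=> La_c La_fb La_af Lb_a Lb_fc Lb_bf Lc_b Lc_fa Lc_cf _ _ _.
rewrite !tmulE => hfb hfc hfa.
have [oB hC [Mc hMc McA]] := symplectic_triangle_step Gcc Gfc Gcf Gaf Gbf
  hfb hfc hfa (eqmx_submx Lc_b Lc_cf) (eqmx_submx La_af La_c) (eqmx_submx Lb_a Lb_fc).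
have [oC _ [Ma hMa MaB]] := symplectic_triangle_step Gaa Gfa Gaf Gbf Gcf
  hfc hfa hfb (eqmx_submx La_c La_af) (eqmx_submx Lb_bf Lb_a) (eqmx_submx Lc_b Lc_fa).
have [oA _ [Mb hMb MbC]] := symplectic_triangle_step Gbb Gfb Gbf Gcf Gaf
  hfa hfb hfc (eqmx_submx Lb_a Lb_bf) (eqmx_submx Lc_cf Lc_b) (eqmx_submx La_c La_fb).
split=> //; split.
  by move: oC; rewrite /orthogonal_mx hC mulmxN mulmxA => /eqP; rewrite eqr_oppLR => /eqP.
split.
- by rewrite {1}hMc (mulmx_orthogonal_inv McA oA).
- by rewrite {1}hMa (mulmx_orthogonal_inv MaB oB).
- by rewrite {1}hMb (mulmx_orthogonal_inv MbC oC).
Qed.
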